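(* Let $\ell,\hat\ell:\mathbb{R}^q\times\mathbb{R}^q\to(0,1)$ with $\hat\ell$ continuous and $\hat\ell(x,\xi)\ge\ell(x,\xi)$ for all $x,\xi\in\mathbb{R}^q$. Let $s\in\mathbb{R}^q$, $\xi_1,\dots,\xi_n\in\mathbb{R}^q$, and for functions $a,b:\mathbb{R}^q\times\mathbb{R}^q\to(0,1)$ and $x\in\mathbb{R}^q$ define $$K(s,a\,\|\,x,b;\xi_{1:n})=\sum_{k=1}^n\Big[a(s,\xi_k)\ln\frac{a(s,\xi_k)}{b(x,\xi_k)}+(1-a(s,\xi_k))\ln\frac{1-a(s,\xi_k)}{1-b(x,\xi_k)}\Big].$$ Let $c_i,c_j\in\mathbb{R}^q$ satisfy $\hat\ell(c_j,\xi_k)\ge\hat\ell(c_i,\xi_k)$ for all $k\in\{1,\dots,n\}$. Then $$K(s,\ell\,\|\,c_j,\hat\ell;\xi_{1:n})<K(s,\ell\,\|\,c_i,\hat\ell;\xi_{1:n})\implies K(s,\hat\ell\,\|\,c_j,\hat\ell;\xi_{1:n})<K(s,\hat\ell\,\|\,c_i,\hat\ell;\xi_{1:n}).$$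
   Context: $\ell$ is the true detection-probability function and $\hat\ell$ an assumed envelope; $K(s,a\|x,b;\xi_{1:n})$ is the KL divergence between the joint distribution of independent Bernoulli measurements with parameters $a(s,\xi_k)$ and that with parameters $b(x,\xi_k)$. *)

From HB Require Import structures.
From mathcomp Require Import all_boot all_order all_algebra.
From mathcomp Require Import all_classical all_reals all_analysis.
Set Implicit Arguments. Unset Strict Implicit. Unset Printing Implicit Defensive.
Import Order.TTheory GRing.Theory Num.Theory.
Import numFieldNormedType.Exports.
Local Open Scope ring_scope.

(* K(s,a || x,b; xi_{1:n}) : KL divergence between independent Bernoulli
   measurements, summed over k = 1..n (indexed here by 'I_n). *)
Definition Kdiv (R : realType) (q n : nat)
  (s : 'rV[R]_q) (a : 'rV[R]_q * 'rV[R]_q -> R)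
  (x : 'rV[R]_q) (b : 'rV[R]_q * 'rV[R]_q -> R) (xi : 'I_n -> 'rV[R]_q) : R :=
  \sum_(k < n)
    (a (s, xi k) * ln (a (s, xi k) / b (x, xi k))
     + (1 - a (s, xi k)) * ln ((1 - a (s, xi k)) / (1 - b (x, xi k)))).

From HB Require Import structures.
From mathcomp Require Import all_boot all_order all_algebra.
From mathcomp Require Import all_classical all_reals all_analysis.
From mathcomp Require Import ring.
Import Order.TTheory GRing.Theory Num.Theory.
Import numFieldNormedType.Exports.
Local Open Scope ring_scope.

(* For a fixed success probability a, the change of the Bernoulli divergence
   KL(a || b) when b increases to b' is the log-likelihood ratio
   a (ln b - ln b') + (1 - a) (ln (1 - b) - ln (1 - b')), which is affine in a
   with slope <= 0.  So the larger the true probability a, the more moving the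
   estimate up decreases the divergence; summing over the measurements with
   a = l <= lh gives the claim. *)

Section BernoulliKL.
Context {R : realType}.

Definition bernoulli_kl (a b : R) : R :=
  a * ln (a / b) + (1 - a) * ln ((1 - a) / (1 - b)).

Lemma bernoulli_klB (a b b' : R) : 0 < a < 1 -> 0 < b < 1 -> 0 < b' < 1 ->
  bernoulli_kl a b' - bernoulli_kl a b =
  a * (ln b - ln b') + (1 - a) * (ln (1 - b) - ln (1 - b')).
Proof.
move=> /andP[a0 a1] /andP[b0 b1] /andP[b'0 b'1].
have pos1B x : x < 1 -> 1 - x \in Num.pos by rewrite -topredE /= subr_gt0.
by rewrite /bernoulli_kl !ln_div ?pos1B ?posrE //; ring.
Qed.

Lemma bernoulli_klB_antitone (a a' b b' : R) :
  0 < a < 1 -> 0 < a' < 1 -> 0 < b < 1 -> 0 < b' < 1 -> a <= a' -> b <= b' ->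
  bernoulli_kl a' b' - bernoulli_kl a' b <= bernoulli_kl a b' - bernoulli_kl a b.
Proof.
move=> ha ha' hb hb' le_aa' le_bb'.
rewrite !bernoulli_klB // -subr_le0.
have -> : a' * (ln b - ln b') + (1 - a') * (ln (1 - b) - ln (1 - b'))
          - (a * (ln b - ln b') + (1 - a) * (ln (1 - b) - ln (1 - b'))) =
          (a' - a) * ((ln b - ln b') - (ln (1 - b) - ln (1 - b'))) by ring.
case/andP: hb => b0 b1; case/andP: hb' => b'0 b'1.
have ln_le : ln b <= ln b' by rewrite ler_ln ?posrE.
have ln1B_le : ln (1 - b') <= ln (1 - b) by rewrite ler_ln ?posrE ?subr_gt0 ?lerB.
rewrite mulr_ge0_le0 ?subr_ge0 // subr_le0.
by rewrite (le_trans _ (_ : 0 <= _)) ?subr_le0 ?subr_ge0.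
Qed.

End BernoulliKL.

Lemma Kdiv_sum (R : realType) (q n : nat) (s x : 'rV[R]_q)
    (a b : 'rV[R]_q * 'rV[R]_q -> R) (xi : 'I_n -> 'rV[R]_q) :
  Kdiv s a x b xi = \sum_(k < n) bernoulli_kl (a (s, xi k)) (b (x, xi k)).
Proof. by []. Qed.

Lemma KdivB_antitone (R : realType) (q n : nat)
    (a a' b : 'rV[R]_q * 'rV[R]_q -> R)
    (ha : forall x xi, 0 < a (x, xi) < 1)
    (ha' : forall x xi, 0 < a' (x, xi) < 1)
    (hb : forall x xi, 0 < b (x, xi) < 1)
    (le_aa' : forall x xi, a (x, xi) <= a' (x, xi))
    (s : 'rV[R]_q) (xi : 'I_n -> 'rV[R]_q) (x y : 'rV[R]_q)
    (le_xy : forall k : 'I_n, b (x, xi k) <= b (y, xi k)) :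
  Kdiv s a' y b xi - Kdiv s a' x b xi <= Kdiv s a y b xi - Kdiv s a x b xi.
Proof.
rewrite !Kdiv_sum -!sumrB; apply: ler_sum => k _.
exact: bernoulli_klB_antitone.
Qed.

Theorem lemma2 (R : realType) (q n : nat)
  (l lh : 'rV[R]_q * 'rV[R]_q -> R)
  (hl : forall x xi, 0 < l (x, xi) < 1)
  (hlh : forall x xi, 0 < lh (x, xi) < 1)
  (hcont : continuous lh)
  (hle : forall x xi, l (x, xi) <= lh (x, xi))
  (s : 'rV[R]_q) (xi : 'I_n -> 'rV[R]_q) (ci cj : 'rV[R]_q)
  (hij : forall k : 'I_n, lh (ci, xi k) <= lh (cj, xi k)) :
  Kdiv s l cj lh xi < Kdiv s l ci lh xi ->
  Kdiv s lh cj lh xi < Kdiv s lh ci lh xi.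
Proof.
rewrite -[_ < Kdiv s l _ _ _]subr_lt0 -[_ < Kdiv s lh _ _ _]subr_lt0.
exact/le_lt_trans/KdivB_antitone.
Qed.
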